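(* For $n\in\mathbb{N}$ let $h=2/\sqrt n$ and $x_k=-\sqrt n+\frac{2k}{\sqrt n}$ for $k=0,1,\dots,n$. For $\mu\in\mathbb{R}$ and $s>0$ define $$I_d=h\sum_{k=0}^n\exp\Big\{-\frac{s^2}{2}(x_k-\mu)^2\Big\},\qquad I_c=\int_{-\infty}^{\infty}\exp\Big\{-\frac{s^2}{2}(x-\mu)^2\Big\}dx.$$ Then $I_d\le\big(1+\frac{\eta s^2}{n}\big)I_c$, where $\eta=3/\sqrt{8\pi e}\le0.37$. *)

From Stdlib Require Import Reals.
Open Scope R_scope.

Definition improper_integral_R (f : R -> R) (l : R) : Prop :=
  (forall a b : R, exists _ : Riemann_integrable f a b, True) /\
  (forall eps : R, 0 < eps -> exists M : R, forall (a b : R)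
      (pr : Riemann_integrable f a b),
      a <= - M -> M <= b -> Rabs (RiemannInt pr - l) < eps).

Definition gauss (s mu x : R) : R := exp (- (s ^ 2 / 2) * (x - mu) ^ 2).

Definition step (n : nat) : R := 2 / sqrt (INR n).
Definition node (n k : nat) : R := - sqrt (INR n) + 2 * INR k / sqrt (INR n).

(* I_d = h * sum_{k=0}^n gauss(x_k)  (sum_f_R0 f n sums k = 0..n) *)
Definition I_d (n : nat) (s mu : R) : R :=
  step n * sum_f_R0 (fun k => gauss s mu (node n k)) n.

Definition eta : R := 3 / sqrt (8 * PI * exp 1).

(* Each grid value is compared with the integral over a cell around its node.
   Bounding exp from below by its tangent line at the node gives a quadratic
   minorant of the Gaussian whose integral over [x_k - w, x_k + w] is
   gauss(x_k) (2w - s^2 w^3 / 3), the linear term cancelling by symmetry.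
   For 2w <= h the cells are disjoint, so the integral dominates
   (2w - s^2 w^3 / 3) times the grid sum.  With w = h/2 when s h <= 3 and
   w = 3/(2s) otherwise, h <= (1 + eta' s^2 / n) (2w - s^2 w^3 / 3) holds for
   every eta' >= 3/10, and eta >= 3/10. *)

From Stdlib Require Import Reals Lra Lia Machin Classical_Prop.
From Coquelicot Require Import Coquelicot.
Open Scope R_scope.

Section NonnegativeIntegrand.

Variable f : R -> R.
Hypothesis ex_RInt_f : forall a b, ex_RInt f a b.
Hypothesis f_ge0 : forall x, 0 <= f x.

Lemma RInt_Chasles_R a b c : RInt f a b + RInt f b c = RInt f a c.
Proof. apply (@RInt_Chasles R_CompleteNormedModule f a b c); apply ex_RInt_f. Qed.

Lemma RInt_ge0 a b : a <= b -> 0 <= RInt f a b.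
Proof. now intros Hab; apply RInt_ge_0. Qed.

Lemma RInt_le_subinterval a a0 b0 b :
  a <= a0 -> a0 <= b0 -> b0 <= b -> RInt f a0 b0 <= RInt f a b.
Proof.
  intros Ha Hab Hb.
  rewrite <- (RInt_Chasles_R a a0 b), <- (RInt_Chasles_R a0 b0 b).
  pose proof (RInt_ge0 a a0 Ha). pose proof (RInt_ge0 b0 b Hb). lra.
Qed.

Lemma sum_RInt_cells_le (p : nat -> R) (w : R) :
  0 <= w -> (forall k, p k + 2 * w <= p (S k)) ->
  forall m, sum_f_R0 (fun k => RInt f (p k - w) (p k + w)) m
            <= RInt f (p 0%nat - w) (p m + w).
Proof.
  intros Hw Hp. induction m as [|m IH]; simpl; [lra|].
  rewrite <- (RInt_Chasles_R (p 0%nat - w) (p m + w) (p (S m) + w)),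
          <- (RInt_Chasles_R (p m + w) (p (S m) - w) (p (S m) + w)).
  pose proof (RInt_ge0 (p m + w) (p (S m) - w) ltac:(specialize (Hp m); lra)).
  lra.
Qed.

(* The improper integral is the supremum of the integrals over compact
   intervals, which is finite once those are uniformly bounded. *)
Lemma improper_integral_R_of_bounded (B : R) :
  (forall a b, a <= b -> RInt f a b <= B) ->
  exists l, improper_integral_R f l /\ forall a b, a <= b -> RInt f a b <= l.
Proof.
  intros HB.
  set (E := fun y => exists a b, a <= b /\ y = RInt f a b).
  destruct (completeness E) as [l [Hub Hlub]].
  - now exists B; intros y [a [b [Hab ->]]]; apply HB.
  - now exists (RInt f 0 0), 0, 0; split; [lra|].
  assert (Hle : forall a b, a <= b -> RInt f a b <= l)
    by (intros a b Hab; apply Hub; exists a, b; auto).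
  exists l; split; [split|exact Hle].
  - now intros a b; exists (ex_RInt_Reals_0 _ _ _ (ex_RInt_f a b)).
  - intros eps Heps.
    assert (Happrox : exists y, E y /\ l - eps < y).
    { apply NNPP; intros Hno.
      enough (l <= l - eps) by lra.
      apply Hlub; intros y Hy; apply Rnot_lt_le; intros Hlt; apply Hno; eauto. }
    destruct Happrox as [y [[a0 [b0 [Hab0 ->]]] Hy]].
    exists (Rabs a0 + Rabs b0); intros a b pr Ha Hb.
    rewrite <- (RInt_Reals _ _ _ pr).
    pose proof (Rle_abs a0). pose proof (Rle_abs (- a0)).
    pose proof (Rle_abs b0). pose proof (Rle_abs (- b0)). rewrite !Rabs_Ropp in *.
    pose proof (RInt_le_subinterval a a0 b0 b ltac:(lra) Hab0 ltac:(lra)).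
    pose proof (Hle a b ltac:(lra)).
    apply Rabs_def1; lra.
Qed.

End NonnegativeIntegrand.

Section Gaussian.

Variables s mu : R.

Lemma gauss_continuous x : continuous (gauss s mu) x.
Proof.
  apply (@ex_derive_continuous R_AbsRing R_NormedModule).
  now unfold gauss; auto_derive.
Qed.

Lemma ex_RInt_gauss a b : ex_RInt (gauss s mu) a b.
Proof.
  apply (@ex_RInt_continuous R_CompleteNormedModule).
  now intros; apply gauss_continuous.
Qed.

Lemma gauss_ge0 x : 0 <= gauss s mu x.
Proof. left; apply exp_pos. Qed.

Lemma gauss_ge_quadratic x0 x :
  gauss s mu x0 * (1 - s ^ 2 * (x0 - mu) * (x - x0) - s ^ 2 / 2 * (x - x0) ^ 2)
  <= gauss s mu x.
Proof.
  unfold gauss.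
  replace (- (s ^ 2 / 2) * (x - mu) ^ 2) with
    (- (s ^ 2 / 2) * (x0 - mu) ^ 2
     + (- s ^ 2 * (x0 - mu) * (x - x0) - s ^ 2 / 2 * (x - x0) ^ 2)) by field.
  rewrite exp_plus; apply Rmult_le_compat_l; [left; apply exp_pos|].
  pose proof (exp_ineq1_le (- s ^ 2 * (x0 - mu) * (x - x0) - s ^ 2 / 2 * (x - x0) ^ 2)).
  lra.
Qed.

Lemma RInt_gauss_cell_ge x0 w : 0 <= w ->
  gauss s mu x0 * (2 * w - s ^ 2 * w ^ 3 / 3) <= RInt (gauss s mu) (x0 - w) (x0 + w).
Proof.
  intros Hw.
  set (c := gauss s mu x0).
  set (q := fun x => c * (1 - s ^ 2 * (x0 - mu) * (x - x0) - s ^ 2 / 2 * (x - x0) ^ 2)).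
  set (Q := fun x => c * ((x - x0) - s ^ 2 * (x0 - mu) * (x - x0) ^ 2 / 2
                          - s ^ 2 * (x - x0) ^ 3 / 6)).
  assert (Hq : is_RInt q (x0 - w) (x0 + w) (minus (Q (x0 + w)) (Q (x0 - w)))).
  { apply (@is_RInt_derive R_CompleteNormedModule).
    - now intros; unfold Q, q; auto_derive; [|field].
    - now intros; apply (@ex_derive_continuous R_AbsRing R_NormedModule); unfold q; auto_derive. }
  replace (c * (2 * w - s ^ 2 * w ^ 3 / 3)) with (minus (Q (x0 + w)) (Q (x0 - w)))
    by (unfold minus, plus, opp, Q; simpl; field).
  rewrite <- (is_RInt_unique _ _ _ _ Hq).
  apply RInt_le; [lra | eexists; exact Hq | apply ex_RInt_gauss |].
  now intros; apply gauss_ge_quadratic.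
Qed.

(* exp (-y) <= 1 / (1 + y/2) for y = s^2 (x - mu)^2 / 2; the factor 1/2 makes
   the Lorentzian bound integrate to an arctangent without square roots. *)
Lemma gauss_le_lorentzian x : gauss s mu x <= 1 / (1 + s ^ 2 * (x - mu) ^ 2 / 4).
Proof.
  unfold gauss. set (y := s ^ 2 / 2 * (x - mu) ^ 2).
  assert (Hy : 0 <= y) by (unfold y; pose proof (pow2_ge_0 s); pose proof (pow2_ge_0 (x - mu)); nra).
  replace (1 + s ^ 2 * (x - mu) ^ 2 / 4) with (1 + y / 2) by (unfold y; field).
  replace (- (s ^ 2 / 2) * (x - mu) ^ 2) with (- y) by (unfold y; ring).
  rewrite exp_Ropp; unfold Rdiv; rewrite Rmult_1_l.
  apply Rinv_le_contravar; [lra|].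
  pose proof (exp_ineq1_le y). lra.
Qed.

Lemma RInt_gauss_le a b : 0 < s -> a <= b -> RInt (gauss s mu) a b <= 2 * PI / s.
Proof.
  intros Hs Hab.
  set (g := fun x => 1 / (1 + s ^ 2 * (x - mu) ^ 2 / 4)).
  set (G := fun x => 2 / s * atan (s * (x - mu) / 2)).
  assert (Hden : forall x, 1 + s ^ 2 * (x - mu) ^ 2 / 4 <> 0)
    by (intros x; pose proof (pow2_ge_0 (s * (x - mu))); rewrite Rpow_mult_distr in *; lra).
  assert (Hg : is_RInt g a b (minus (G b) (G a))).
  { apply (@is_RInt_derive R_CompleteNormedModule).
    - intros x _; unfold G, g; auto_derive; [auto|].
      unfold Rsqr; field; split; [|lra].
      pose proof (pow2_ge_0 (s * (x - mu))); lra.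
    - intros x _; apply (@ex_derive_continuous R_AbsRing R_NormedModule).
      unfold g; auto_derive; apply Hden. }
  apply Rle_trans with (RInt g a b).
  { apply RInt_le; [lra | apply ex_RInt_gauss | eexists; exact Hg |].
    now intros; apply gauss_le_lorentzian. }
  rewrite (is_RInt_unique _ _ _ _ Hg); unfold minus, plus, opp, G; simpl.
  pose proof (atan_bound (s * (b - mu) / 2)). pose proof (atan_bound (s * (a - mu) / 2)).
  replace (2 * PI / s) with (2 / s * (PI / 2) - 2 / s * (- PI / 2)) by (field; lra).
  assert (0 < 2 / s) by (apply Rdiv_lt_0_compat; lra).
  apply Rplus_le_compat;
    [apply Rmult_le_compat_l | apply Ropp_le_contravar, Rmult_le_compat_l]; lra.
Qed.

Lemma gauss_improper_integral : 0 < s ->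
  exists Ic, improper_integral_R (gauss s mu) Ic /\
    forall a b, a <= b -> RInt (gauss s mu) a b <= Ic.
Proof.
  intros Hs; apply (improper_integral_R_of_bounded _ ex_RInt_gauss gauss_ge0 (2 * PI / s)).
  now intros a b; apply RInt_gauss_le.
Qed.

End Gaussian.

Lemma node_S n k : (0 < n)%nat -> node n (S k) = node n k + step n.
Proof.
  intros Hn; unfold node, step; rewrite S_INR.
  pose proof (sqrt_lt_R0 _ (lt_0_INR _ Hn)). field; lra.
Qed.

Lemma node_0_le_node n : (0 < n)%nat -> node n 0 <= node n n.
Proof.
  intros Hn; unfold node; rewrite Rmult_0_r, Rdiv_0_l.
  pose proof (Rdiv_le_0_compat (2 * INR n) _ ltac:(pose proof (pos_INR n); lra)
                (sqrt_lt_R0 _ (lt_0_INR _ Hn))).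
  lra.
Qed.

Lemma grid_sum_le_RInt n s mu w : (0 < n)%nat -> 0 <= w -> 2 * w <= step n ->
  (2 * w - s ^ 2 * w ^ 3 / 3) * sum_f_R0 (fun k => gauss s mu (node n k)) n
  <= RInt (gauss s mu) (node n 0 - w) (node n n + w).
Proof.
  intros Hn Hw Hstep.
  rewrite scal_sum; eapply Rle_trans.
  - apply sum_Rle with (Bn := fun k => RInt (gauss s mu) (node n k - w) (node n k + w)).
    intros k _; apply RInt_gauss_cell_ge, Hw.
  - apply (sum_RInt_cells_le _ (ex_RInt_gauss s mu) (gauss_ge0 s mu) _ _ Hw).
    intros k; rewrite (node_S n k Hn); lra.
Qed.

Lemma PI_gt_314 : 314 / 100 < PI.
Proof.
  destruct (PI_2_3_7_ineq 1) as [H _].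
  unfold tg_alt, PI_2_3_7_tg, Ratan_seq in H; simpl in H. lra.
Qed.

Lemma pow_one_plus_le_exp (y : R) (k : nat) : 0 <= 1 + y -> (1 + y) ^ k <= exp (INR k * y).
Proof.
  intros Hy; induction k as [|k IH]; [rewrite Rmult_0_l, exp_0; simpl; lra|].
  rewrite S_INR, Rmult_plus_distr_r, Rmult_1_l, exp_plus, Rmult_comm; simpl.
  apply Rmult_le_compat; [lra | apply pow_le; lra | apply exp_ineq1_le | exact IH].
Qed.

Lemma exp_1_gt_263 : 263 / 100 < exp 1.
Proof.
  pose proof (pow_one_plus_le_exp (1 / 16) 16 ltac:(lra)) as H.
  replace (INR 16 * (1 / 16)) with 1 in H by (simpl; lra). simpl in H. lra.
Qed.

Lemma eta_bounds : 3 / 10 <= eta <= 37 / 100.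
Proof.
  unfold eta. set (X := 8 * PI * exp 1).
  assert (HX : 66 <= X <= 96).
  { pose proof PI_gt_314. pose proof PI_4. pose proof exp_1_gt_263. pose proof exp_le_3.
    unfold X; split; nra. }
  assert (Hlo : 300 / 37 <= sqrt X)
    by (rewrite <- (sqrt_square (300 / 37)) by lra; apply sqrt_le_1_alt; lra).
  assert (Hhi : sqrt X <= 10)
    by (rewrite <- (sqrt_square 10) by lra; apply sqrt_le_1_alt; lra).
  split; [apply (Rle_div_r (3 / 10)) | apply Rle_div_l]; lra.
Qed.

Lemma cell_width_exists (eta' a : R) : 3 / 10 <= eta' -> 0 < a ->
  exists u, 0 < u <= 1 /\ 2 <= (1 + eta' * a ^ 2) * (2 * u - a ^ 2 * u ^ 3 / 3).
Proof.
  intros Heta Ha; destruct (Rle_dec a (3 / 2)) as [Hsmall|Hlarge].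
  - exists 1; split; [lra|].
    assert (Ha2 : 0 <= a ^ 2 <= 9 / 4) by (split; nra).
    assert (0 <= eta' * (2 - a ^ 2 / 3) - 1 / 3) by nra.
    assert (0 <= a ^ 2 * (eta' * (2 - a ^ 2 / 3) - 1 / 3)) by (apply Rmult_le_pos; lra).
    replace (1 ^ 3) with 1 by ring. nra.
  - exists (3 / (2 * a)); split.
    { split; [apply Rdiv_lt_0_compat | apply Rle_div_l]; lra. }
    replace (2 * (3 / (2 * a)) - a ^ 2 * (3 / (2 * a)) ^ 3 / 3) with (15 / (8 * a))
      by (field; lra).
    replace ((1 + eta' * a ^ 2) * (15 / (8 * a))) with (15 * (1 + eta' * a ^ 2) / (8 * a))
      by (field; lra).
    apply (Rle_div_r 2); [lra|].
    pose proof (pow2_ge_0 (a - 16 / 9)). pose proof (pow2_ge_0 a). nra.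
Qed.

Theorem mainTheorem15 (n : nat) (hn : (1 <= n)%nat) (mu s : R) (hs : 0 < s) :
  eta <= 37 / 100 /\
  exists Ic : R, improper_integral_R (gauss s mu) Ic /\
    I_d n s mu <= (1 + eta * s ^ 2 / INR n) * Ic.
Proof.
  pose proof eta_bounds as Heta.
  split; [lra|].
  destruct (gauss_improper_integral s mu hs) as [Ic [HIc HIc_ge]].
  exists Ic; split; [exact HIc|].
  assert (HnR : 0 < INR n) by (apply lt_0_INR; lia).
  pose proof (sqrt_lt_R0 _ HnR) as Hsqrt. pose proof (sqrt_sqrt _ (Rlt_le _ _ HnR)) as Hsq.
  set (t := / sqrt (INR n)).
  assert (Ht : 0 < t) by (apply Rinv_0_lt_compat; lra).
  assert (Hstep : step n = 2 * t) by (unfold step, t; field; lra).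
  assert (Hscale : eta * s ^ 2 / INR n = eta * (s * t) ^ 2)
    by (unfold t; rewrite <- Hsq at 1; field; lra).
  destruct (cell_width_exists eta (s * t) ltac:(lra) ltac:(nra)) as [u [Hu Hratio]].
  set (S := sum_f_R0 (fun k => gauss s mu (node n k)) n).
  assert (HS : 0 <= S) by (apply cond_pos_sum; intros; apply gauss_ge0).
  assert (Hcells : (2 * (t * u) - s ^ 2 * (t * u) ^ 3 / 3) * S <= Ic).
  { eapply Rle_trans.
    - apply grid_sum_le_RInt; [lia | nra | rewrite Hstep; nra].
    - apply HIc_ge; pose proof (node_0_le_node n ltac:(lia)); nra. }
  replace (2 * (t * u) - s ^ 2 * (t * u) ^ 3 / 3)
    with (t * (2 * u - (s * t) ^ 2 * u ^ 3 / 3)) in Hcells by field.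
  unfold I_d; fold S; rewrite Hstep, Hscale.
  assert (0 <= 1 + eta * (s * t) ^ 2) by (pose proof (pow2_ge_0 (s * t)); nra).
  assert (0 <= t * S) by nra.
  nra.
Qed.
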